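(* Let $G$ be a bipartite distance-regular graph of diameter $d$ which is an antipodal double cover, and let $B$ be its tridiagonal intersection matrix. If $\ker B\neq 0$, then $d$ is even. Moreover, in this case $\ker B$ has a basis consisting of a single vector $\boldsymbol{u}=(u_0,u_1,\dots,u_d)^T$ with $u_0=1$, $u_1=0$ and $u_d=(-1)^{d/2}$.
   Context: A connected graph $G$ of diameter $d$ is distance-regular if there are non-negative integers $b_i,c_i$ ($0\le i\le d$) such that for any two vertices $x,y$ at distance $i$, $y$ has exactly $c_i$ neighbours at distance $i-1$ from $x$ and exactly $b_i$ neighbours at distance $i+1$ from $x$. $G$ is $r$-regular with $r=b_0$, $c_0=b_d=0$, $c_1=1$, and $a_i=r-b_i-c_i$. $B$ is the $(d+1)\times(d+1)$ tridiagonal matrix indexed by $0,\dots,d$ with $B_{i,i}=a_i$, $B_{i,i+1}=c_{i+1}$, $B_{i+1,i}=b_i$, all other entries $0$. $G$ is an antipodal double cover if for every vertex $x$ there is exactly one vertex at distance $d$ from $x$. *)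

From mathcomp Require Import all_boot all_order all_algebra.
Set Implicit Arguments. Unset Strict Implicit. Unset Printing Implicit Defensive.
Import Order.TTheory GRing.Theory Num.Theory.
Local Open Scope ring_scope.

Definition simple_graph (T : finType) (e : rel T) : Prop :=
  symmetric e /\ irreflexive e.

Fixpoint ball (T : finType) (e : rel T) (n : nat) (x : T) : {set T} :=
  match n with
  | 0 => [set x]
  | n'.+1 => ball e n' x :|: [set y | [exists z in ball e n' x, e z y]]
  end.

(* Path distance: least n with y in ball n x (equals #|T| if unreachable). *)
Definition gdist (T : finType) (e : rel T) (x y : T) : nat :=
  find (fun n => y \in ball e n x) (iota 0 #|T|).

Definition gconnected (T : finType) (e : rel T) : Prop :=
  forall x y : T, exists n, y \in ball e n x.

Definition has_diameter (T : finType) (e : rel T) (d : nat) : Prop :=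
  (forall x y : T, (gdist e x y <= d)%N) /\ exists x y : T, gdist e x y = d.

Definition distance_regular (T : finType) (e : rel T) (d : nat)
    (b c : nat -> nat) : Prop :=
  [/\ simple_graph e, gconnected e, has_diameter e d,
      [/\ c 0 = 0, b d = 0 & c 1 = 1] &
      forall x y : T,
        #|[set z | e y z & gdist e x z == (gdist e x y).-1]| = c (gdist e x y)
        /\ #|[set z | e y z & gdist e x z == (gdist e x y).+1]| = b (gdist e x y)].

Definition bipartite (T : finType) (e : rel T) : Prop :=
  exists f : T -> bool, forall x y, e x y -> f x != f y.

Definition antipodal_double_cover (T : finType) (e : rel T) (d : nat) : Prop :=
  forall x : T, #|[set y | gdist e x y == d]| = 1.

(* a_i = r - b_i - c_i with r = b_0 (computed in R, no truncation). *)
Definition inter_a (R : nzRingType) (b c : nat -> nat) (i : nat) : R :=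
  (b 0)%:R - (b i)%:R - (c i)%:R.

Definition inter_matrix (R : nzRingType) (d : nat) (b c : nat -> nat)
    : 'M[R]_d.+1 :=
  \matrix_(i < d.+1, j < d.+1)
    if i == j :> nat then inter_a R b c i
    else if j == i.+1 :> nat then (c j)%:R
    else if i == j.+1 :> nat then (b j)%:R
    else 0.

From mathcomp Require Import all_boot all_order all_algebra.
From mathcomp Require Import zify ring.
Import GRing.Theory Num.Theory.
Set Implicit Arguments. Unset Strict Implicit.

(* Bipartiteness makes every neighbour of y lie one step closer to or farther
   from x, so b_0 = b_i + c_i, i.e. a_i = 0.  In an antipodal double cover the
   antipode x' of x satisfies d(x', z) = d - d(x, z), because from any z one can
   keep stepping away from x until distance d, where only x' lies; hence
   b_i = c_(d-i).  With a = 0 the rows of B u = 0 read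
   b_(i-1) u_(i-1) + c_(i+1) u_(i+1) = 0, so u is determined by u_0: u_1 = 0
   forces all odd entries to vanish and u_(2k) = (-1)^k prod_(j<k) b_(2j)/c_(2j+2).
   For odd d the last row b_(d-1) u_(d-1) = 0 then forces u = 0; for even d the
   symmetry b_i = c_(d-i) makes the product for u_d equal to 1. *)

Section Graph.
Variables (T : finType) (e : rel T).

Lemma ballS n x y :
  (y \in ball e n.+1 x) = (y \in ball e n x) || [exists z in ball e n x, e z y].
Proof. by rewrite /= in_setU in_set. Qed.

Lemma subset_ball m n x : (m <= n)%N -> ball e m x \subset ball e n x.
Proof.
move=> /subnK <-; elim: (n - m)%N => [|k IH] //=.
exact: subset_trans IH (subsetUl _ _).
Qed.

Lemma ball_stable k n x :
  ball e k.+1 x = ball e k x -> (k <= n)%N -> ball e n x = ball e k x.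
Proof.
move=> Hk /subnK <-; elim: (n - k)%N => [|m IH] //=.
by rewrite IH; apply: Hk.
Qed.

Lemma card_ball_gt n x :
  (forall k, (k < n)%N -> ball e k.+1 x != ball e k x) -> (n < #|ball e n x|)%N.
Proof.
elim: n => [|n IH] Hgrow; first by rewrite cards1.
apply: leq_ltn_trans (IH _) (proper_card _) => [k Hk|]; first by apply: Hgrow; lia.
by rewrite properEneq eq_sym Hgrow // subset_ball.
Qed.

Lemma ball_stabilises x : exists2 k, (k < #|T|)%N & ball e k.+1 x = ball e k x.
Proof.
have [/existsP [k /eqP Hk]|Hnone] :=
  boolP [exists k : 'I_#|T|, ball e k.+1 x == ball e k x]; first by exists k.
have := max_card (mem (ball e #|T| x)); rewrite leqNgt card_ball_gt // => k Hk.
by apply: contra Hnone => Hk'; apply/existsP; exists (Ordinal Hk).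
Qed.

(* [gdist] only searches the radii below [#|T|]; balls stop growing before that. *)
Lemma ball_small n x y :
  y \in ball e n x -> exists k, [/\ (k <= n)%N, (k < #|T|)%N & y \in ball e k x].
Proof.
have [k kT Hk] := ball_stabilises x.
case: (leqP n k) => [nk Hy|kn]; first by exists n; split=> //; apply: leq_ltn_trans kT.
by rewrite (ball_stable Hk (ltnW kn)) => Hy; exists k; split=> //; apply: ltnW.
Qed.

Lemma gdist_le_ball n x y : y \in ball e n x -> (gdist e x y <= n)%N.
Proof.
case/ball_small=> k [kn kT Hy]; apply: leq_trans kn.
by rewrite leqNgt; apply/negP => /(before_find 0); rewrite nth_iota // add0n Hy.
Qed.

Lemma ball_gdist n x y : y \in ball e n x -> y \in ball e (gdist e x y) x.
Proof.
case/ball_small=> k [_ kT Hy].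
have Hhas : has (fun m => y \in ball e m x) (iota 0 #|T|).
  by apply/hasP; exists k; rewrite ?mem_iota.
have := nth_find 0 Hhas; rewrite nth_iota //.
by rewrite has_find size_iota in Hhas.
Qed.

Lemma ball_trans m n x y z :
  y \in ball e m x -> z \in ball e n y -> z \in ball e (m + n) x.
Proof.
move=> Hy; elim: n z => [|n IH] z; first by rewrite /= in_set1 addn0 => /eqP ->.
rewrite ballS addnS ballS => /orP[/IH -> //|/existsP[w /andP[Hw Hwz]]].
by apply/orP; right; apply/existsP; exists w; rewrite IH.
Qed.

Lemma ball1_adj x y : e x y -> y \in ball e 1 x.
Proof.
by move=> Hxy; rewrite ballS; apply/orP; right; apply/existsP; exists x; rewrite /= in_set1 eqxx.
Qed.

Hypotheses (e_sym : symmetric e) (e_con : gconnected e).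

Lemma ballE n x y : (y \in ball e n x) = (gdist e x y <= n)%N.
Proof.
apply/idP/idP => [|Hn]; first exact: gdist_le_ball.
have [m Hm] := e_con x y.
exact: subsetP (subset_ball x Hn) _ (ball_gdist Hm).
Qed.

Lemma ball_sym n x y : y \in ball e n x -> x \in ball e n y.
Proof.
elim: n y => [|n IH] y; first by rewrite /= !in_set1 eq_sym.
rewrite ballS => /orP[/IH|/existsP[z /andP[Hz Hzy]]].
  exact/subsetP/subset_ball.
by apply: (ball_trans (ball1_adj _)) (IH _ Hz); rewrite e_sym.
Qed.

Lemma gdistC x y : gdist e x y = gdist e y x.
Proof.
by apply/eqP; rewrite eqn_leq -!ballE; apply/andP; split; apply: ball_sym; rewrite ballE.
Qed.

Lemma gdist_triangle x y z : (gdist e x z <= gdist e x y + gdist e y z)%N.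
Proof. by rewrite -ballE; apply: (@ball_trans _ _ _ y); rewrite ballE. Qed.

Lemma gdist_adj x y z : e y z -> (gdist e x z <= (gdist e x y).+1)%N.
Proof.
move=> Hyz; apply: leq_trans (gdist_triangle x y z) _.
by rewrite -addn1 leq_add2l -ballE ball1_adj.
Qed.

Lemma gdistxx x : gdist e x x = 0%N.
Proof. by apply/eqP; rewrite -leqn0 -ballE /= in_set1. Qed.

Lemma gdist_eq0 x y : gdist e x y = 0%N -> y = x.
Proof. by move=> H; apply/eqP; rewrite -in_set1 -[[set x]]/(ball e 0 x) ballE H. Qed.

Lemma gdist_pred x y n :
  gdist e x y = n.+1 -> exists2 z, e z y & gdist e x z = n.
Proof.
move=> Hy; have : y \in ball e n.+1 x by rewrite ballE Hy.
rewrite ballS ballE Hy ltnn => /existsP[z /andP[]]; rewrite ballE => Hz Hzy.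
by exists z => //; have := gdist_adj x Hzy; lia.
Qed.

Lemma gdist_down x y i : (i <= gdist e x y)%N -> exists y', gdist e x y' = i.
Proof.
move Hn : (gdist e x y) => n; elim: n y Hn => [|n IH] y Hy Hi.
  by exists y; rewrite Hy; lia.
have [->|Hne] := eqVneq i n.+1; first by exists y.
by have [z _ Hz] := gdist_pred Hy; apply: (IH z Hz); lia.
Qed.

Lemma odd_gdist (f : T -> bool) :
  (forall x y, e x y -> f x != f y) -> forall x y, odd (gdist e x y) = (f x != f y).
Proof.
move=> Hf x y; move Hn : (gdist e x y) => n.
elim: n y Hn => [|n IH] y Hy; first by rewrite (gdist_eq0 Hy) eqxx.
have [z Hzy Hz] := gdist_pred Hy; have := Hf _ _ Hzy.
by rewrite /= (IH z Hz); case: (f x); case: (f y); case: (f z).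
Qed.

Lemma gdist_adj_neq x y z : bipartite e -> e y z -> gdist e x z != gdist e x y.
Proof.
case=> f Hf Hyz; apply/eqP => Heq; have := Hf _ _ Hyz.
have := odd_gdist Hf x z; rewrite Heq (odd_gdist Hf).
by case: (f x); case: (f y); case: (f z).
Qed.

Section DistanceRegular.
Variables (d : nat) (b c : nat -> nat).
Hypothesis diam : has_diameter e d.
Hypothesis c_card : forall x y,
  #|[set z | e y z & gdist e x z == (gdist e x y).-1]| = c (gdist e x y).
Hypothesis b_card : forall x y,
  #|[set z | e y z & gdist e x z == (gdist e x y).+1]| = b (gdist e x y).

Lemma gdist_le_diam x y : (gdist e x y <= d)%N.
Proof. by case: diam. Qed.

Lemma exists_gdist i : (i <= d)%N -> exists x y, gdist e x y = i.
Proof.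
have [_ [x [y Hxy]]] := diam; rewrite -Hxy => /gdist_down[y' Hy'].
by exists x, y'.
Qed.

Lemma c_gt0 i : (0 < i <= d)%N -> (0 < c i)%N.
Proof.
case/andP=> i_gt0 /exists_gdist[x [y Hxy]].
have [|z Hzy Hz] := @gdist_pred x y i.-1; first by rewrite Hxy; lia.
rewrite -Hxy -c_card; apply/card_gt0P; exists z.
by rewrite inE e_sym Hzy Hz Hxy eqxx.
Qed.

Lemma b_gt0 i : (i < d)%N -> (0 < b i)%N.
Proof.
case/exists_gdist=> x [y Hxy]; have [z Hzy Hz] := gdist_pred Hxy.
by rewrite -Hz -b_card; apply/card_gt0P; exists y; rewrite inE Hzy Hz Hxy eqxx.
Qed.

Hypothesis e_bip : bipartite e.

Lemma card_adj x y : #|[set z | e y z]| = (c (gdist e x y) + b (gdist e x y))%N.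
Proof.
rewrite -c_card -b_card -(cardID [pred z | gdist e x z < gdist e x y] [set z | e y z]).
congr (_ + _); apply: eq_card => z; rewrite !inE.
all: case Hyz: (e y z); rewrite ?andbT ?andbF //.
all: have Hzy : e z y by rewrite e_sym.
all: have := gdist_adj x Hyz; have := gdist_adj x Hzy; have := gdist_adj_neq x e_bip Hyz.
all: lia.
Qed.

Lemma c_add_b_const i : (i <= d)%N -> (c i + b i = c 0 + b 0)%N.
Proof.
case/exists_gdist=> x [y <-].
by rewrite -(card_adj x y) (card_adj y y) gdistxx.
Qed.

Hypothesis anti : antipodal_double_cover e d.

Lemma climb_to_diam x z : exists2 w, gdist e x w = d & (gdist e z w <= d - gdist e x z)%N.
Proof.
move Hk : (d - gdist e x z)%N => k; elim: k z Hk => [|k IH] z Hk.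
  by exists z; rewrite ?gdistxx //; have := gdist_le_diam x z; lia.
have : (0 < b (gdist e x z))%N by apply: b_gt0; lia.
rewrite -b_card => /card_gt0P[z']; rewrite inE => /andP[Hzz' /eqP Hz'].
have [|w Hw Hz'w] := IH z'; first by lia.
exists w => //; apply: leq_trans (gdist_triangle z z' w) _.
by have := gdist_adj z Hzz'; rewrite gdistxx; lia.
Qed.

Lemma antipode_gdist x : exists x', forall z, gdist e x' z = (d - gdist e x z)%N.
Proof.
have /eqP/cards1P[x' Hx'] := anti x.
have far w : gdist e x w = d -> w = x' by move=> Hw; apply/set1P; rewrite -Hx' inE Hw.
have Hxx' : gdist e x x' = d by apply/eqP; rewrite -(in_set (fun y => gdist e x y == d)) Hx' set11.
exists x' => z; have [w /far -> Hzx'] := climb_to_diam x z.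
have := gdist_triangle x z x'; rewrite Hxx' (gdistC z x') in Hzx' *; lia.
Qed.

Lemma b_eq_c_sub i : (i < d)%N -> b i = c (d - i).
Proof.
move=> id; have [x [y Hxy]] := exists_gdist (ltnW id).
have [x' Hx'] := antipode_gdist x.
have Hx'y : gdist e x' y = (d - i)%N by rewrite Hx' Hxy.
rewrite -Hx'y -c_card -Hxy -b_card; apply: eq_card => z; rewrite !inE Hx' Hx'y Hxy.
by case: (e y z) => //=; have := gdist_le_diam x z; lia.
Qed.

End DistanceRegular.
End Graph.

Local Open Scope ring_scope.

Lemma sum_delta (R : nzSemiRingType) (F : nat -> R) n k :
  \sum_(j < n) (k == j :> nat)%:R * F j = (k < n)%N%:R * F k.
Proof.
case: (ltnP k n) => [kn|nk].
  rewrite (bigD1 (Ordinal kn)) //= eqxx mul1r big1 ?addr0 // => j.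
  by rewrite -val_eqE eq_sym => /negbTE /= ->; rewrite mul0r.
rewrite mul0r big1 // => j _.
by rewrite eqn_leq leqNgt (leq_trans (ltn_ord j) nk) mul0r.
Qed.

Lemma col_inord (R : Type) n (v : 'cV[R]_n.+1) : v = \col_(j < n.+1) v (inord j) 0.
Proof. by apply/matrixP => i j; rewrite ord1 mxE inord_val. Qed.

Section IntersectionMatrix.
Variables (R : numFieldType) (d : nat) (b c : nat -> nat).
Local Notation a := (inter_a R b c).
Local Notation B := (inter_matrix R d b c).

(* The indicators kill the terms with the truncated index [0.-1] at [n = 0]
   and with the index [d.+1] at [n = d]. *)
Definition inter_row (f : nat -> R) (n : nat) : R :=
  (0 < n)%N%:R * ((b n.-1)%:R * f n.-1) + a n * f n
  + (n < d)%N%:R * ((c n.+1)%:R * f n.+1).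

Lemma inter_matrix_entry i j : B i j =
  (i == j :> nat)%:R * a i + (i.+1 == j)%:R * (c j)%:R + (i == j.+1 :> nat)%:R * (b j)%:R.
Proof.
rewrite mxE (eq_sym (nat_of_ord j)).
by do 3 case: eqP => ?; rewrite ?mul1r ?mul0r ?addr0 ?add0r //; lia.
Qed.

Lemma mul_inter_matrix_col (f : nat -> R) (i : 'I_d.+1) :
  (B *m \col_(j < d.+1) f j) i 0 = inter_row f i.
Proof.
rewrite mxE; under eq_bigr => j _ do rewrite inter_matrix_entry mxE !mulrDl -!mulrA.
rewrite !big_split /= (sum_delta (fun j => a i * f j)).
rewrite (sum_delta (fun j => (c j)%:R * f j)) ltn_ord ltnS /inter_row addrC addrA mul1r.
congr (_ + _ + _); case: i => -[|n] /= Hn.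
  by rewrite mul0r big1 // => j _; rewrite mul0r.
by rewrite (sum_delta (fun j => (b j)%:R * f j)) ltnW.
Qed.

Lemma mul_inter_matrix_col_eq0 (f : nat -> R) :
  B *m \col_(j < d.+1) f j = 0 <-> forall n, (n <= d)%N -> inter_row f n = 0.
Proof.
split=> [/matrixP Hf n Hn | Hf].
  by have := Hf (inord n) 0; rewrite mul_inter_matrix_col !mxE inordK.
by apply/matrixP => i j; rewrite ord1 mul_inter_matrix_col mxE Hf // -ltnS.
Qed.

(* When [a = 0], row [k.+1] of [B u = 0] reads [b_k u_k + c_(k+2) u_(k+2) = 0]. *)
Fixpoint ker_gen (n : nat) : R :=
  match n with
  | 0 => 1
  | 1 => 0
  | k.+2 => - ((b k)%:R / (c k.+2)%:R) * ker_gen k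
  end.

Lemma ker_genSS n : ker_gen n.+2 = - ((b n)%:R / (c n.+2)%:R) * ker_gen n.
Proof. by []. Qed.

Lemma ker_gen_odd k : ker_gen k.*2.+1 = 0.
Proof. by elim: k => [|k IH] //; rewrite doubleS ker_genSS IH mulr0. Qed.

Lemma ker_gen_double k :
  ker_gen k.*2 = (-1) ^+ k * \prod_(j < k) ((b j.*2)%:R / (c j.*2.+2)%:R).
Proof.
elim: k => [|k IH]; first by rewrite big_ord0 mulr1.
by rewrite doubleS ker_genSS IH big_ord_recr exprS /=; ring.
Qed.

Hypothesis bc_sum : forall n, (n <= d)%N -> b 0 = (b n + c n)%N.
Hypothesis c_pos : forall n, (0 < n <= d)%N -> (0 < c n)%N.
Hypothesis b_pos : forall n, (n < d)%N -> (0 < b n)%N.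

Lemma inter_a_eq0 n : (n <= d)%N -> a n = 0.
Proof. by move/bc_sum; rewrite /inter_a => ->; rewrite natrD; ring. Qed.

Lemma c_neq0 n : (0 < n <= d)%N -> (c n)%:R != 0 :> R.
Proof. by move/c_pos; rewrite pnatr_eq0 -lt0n. Qed.

Lemma b_neq0 n : (n < d)%N -> (b n)%:R != 0 :> R.
Proof. by move/b_pos; rewrite pnatr_eq0 -lt0n. Qed.

Lemma inter_row_a0 f n : (n <= d)%N ->
  inter_row f n = (0 < n)%N%:R * ((b n.-1)%:R * f n.-1) + (n < d)%N%:R * ((c n.+1)%:R * f n.+1).
Proof. by move=> Hn; rewrite /inter_row inter_a_eq0 // mul0r addr0. Qed.

Lemma ker_gen_double_neq0 k : (k.*2 <= d)%N -> ker_gen k.*2 != 0.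
Proof.
move=> Hk; rewrite ker_gen_double mulf_neq0 ?signr_eq0 //.
apply/prodf_neq0 => j _; have jk := ltn_ord j.
by rewrite mulf_neq0 ?invr_eq0 ?b_neq0 ?c_neq0 //; lia.
Qed.

Lemma inter_row_eq0_ker_gen f : (forall n, (n <= d)%N -> inter_row f n = 0) ->
  forall n, (n <= d)%N -> f n = f 0%N * ker_gen n.
Proof.
move=> Hf; suff Hpair n : (n < d)%N -> f n = f 0%N * ker_gen n /\ f n.+1 = f 0%N * ker_gen n.+1.
  by case=> [|n] Hn; [rewrite mulr1 | case: (Hpair n Hn)].
elim: n => [|n IH] Hn.
  split; first by rewrite mulr1.
  have := Hf 0%N (leq0n d); rewrite inter_row_a0 // Hn mul0r add0r mul1r.
  by move/eqP; rewrite mulf_eq0 (negbTE (c_neq0 _)) ?Hn //= mulr0 => /eqP.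
have [Hn0 Hn1] := IH (ltnW Hn); split=> //.
have := Hf n.+1 (ltnW Hn); rewrite inter_row_a0 ?(ltnW Hn) // Hn !mul1r /= Hn0.
move=> /addr0_eq Hrow; apply: (mulfI (c_neq0 (n := n.+2) _)); first lia.
by rewrite -Hrow; field; apply: c_neq0; lia.
Qed.

Lemma inter_matrix_ker_span (v : 'cV[R]_d.+1) :
  B *m v = 0 -> exists k, v = k *: \col_(j < d.+1) ker_gen j.
Proof.
rewrite [v]col_inord => /(mul_inter_matrix_col_eq0 (fun n => v (inord n) 0)).
move=> /inter_row_eq0_ker_gen Hv.
by exists (v (inord 0) 0); apply/matrixP => i j; rewrite !mxE Hv // -ltnS.
Qed.

Lemma mul_inter_matrix_ker_gen : ~~ odd d -> B *m \col_(j < d.+1) ker_gen j = 0.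
Proof.
move=> d_even; apply/mul_inter_matrix_col_eq0 => -[|n] Hn; rewrite inter_row_a0 //.
  by rewrite mul0r add0r mulr0 mulr0.
rewrite /= !mul1r; case: (ltnP n.+1 d) => Hnd.
  by rewrite mul1r; field; apply: c_neq0; lia.
have n_odd : odd n by move: d_even; rewrite (_ : d = n.+1) /= ?negbK //; lia.
by rewrite -(odd_double_half n) n_odd ker_gen_odd !(mulr0, mul0r, addr0).
Qed.

Lemma inter_matrix_ker_odd (v : 'cV[R]_d.+1) : odd d -> B *m v = 0 -> v = 0.
Proof.
move=> d_odd; rewrite [v]col_inord.
move=> /(mul_inter_matrix_col_eq0 (fun n => v (inord n) 0)) Hrow.
have Hv := inter_row_eq0_ker_gen Hrow.
have d_gt0 := odd_gt0 d_odd.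
have d_pred : d.-1 = (d./2).*2 by have := odd_double_half d; rewrite d_odd; lia.
have bd_neq0 : (b d.-1)%:R != 0 :> R by apply: b_neq0; lia.
have wd_neq0 : ker_gen d.-1 != 0 by rewrite d_pred; apply: ker_gen_double_neq0; lia.
have := Hrow d (leqnn d); rewrite inter_row_a0 // ltnn d_gt0 mul0r addr0 mul1r.
move=> /eqP; rewrite mulf_eq0 (negbTE bd_neq0) Hv ?leq_pred //.
rewrite mulf_eq0 (negbTE wd_neq0) orbF => /eqP v0.
by apply/matrixP => i j; rewrite !mxE Hv ?v0 ?mul0r // -ltnS.
Qed.

Hypothesis b_c : forall n, (n < d)%N -> b n = c (d - n)%N.

Lemma ker_gen_last : ~~ odd d -> ker_gen d = (-1) ^+ d./2.
Proof.
move=> d_even; have : d = (d./2).*2 by rewrite -[d in LHS]odd_double_half (negbTE d_even).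
move: (d./2) => m d2.
rewrite {1}d2 ker_gen_double prodf_div.
have -> : \prod_(j < m) (b j.*2)%:R = \prod_(j < m) (c j.*2.+2)%:R :> R.
  rewrite (reindex_inj rev_ord_inj); apply: eq_bigr => j _; have jm := ltn_ord j.
  by rewrite b_c /=; [congr (c _)%:R|]; lia.
rewrite divff ?mulr1 //; apply/prodf_neq0 => j _; have jm := ltn_ord j.
by apply: c_neq0; lia.
Qed.

End IntersectionMatrix.

Lemma bipartite_antipodal_intersection_numbers (T : finType) (e : rel T) d b c :
  distance_regular e d b c -> bipartite e -> antipodal_double_cover e d ->
  [/\ forall n, (n <= d)%N -> b 0 = (b n + c n)%N,
      forall n, (0 < n <= d)%N -> (0 < c n)%N,
      forall n, (n < d)%N -> (0 < b n)%N &
      forall n, (n < d)%N -> b n = c (d - n)%N].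
Proof.
case=> -[e_sym _] e_con diam [c0 _ _] reg bip anti.
have c_card x y := (reg x y).1; have b_card x y := (reg x y).2.
split=> n Hn.
- by rewrite addnC (c_add_b_const e_sym e_con diam c_card b_card bip Hn) c0.
- exact: (c_gt0 e_sym e_con diam c_card Hn).
- exact: (b_gt0 e_con diam b_card Hn).
- exact: (b_eq_c_sub e_sym e_con diam c_card b_card anti Hn).
Qed.

Theorem lemma2p4 (R : realFieldType) (T : finType) (e : rel T) (d : nat)
    (b c : nat -> nat) :
  distance_regular e d b c -> bipartite e -> antipodal_double_cover e d ->
  (exists2 u : 'cV[R]_d.+1, u != 0 & inter_matrix R d b c *m u = 0) ->
  ~~ odd d /\
  exists u : 'cV[R]_d.+1,
    [/\ inter_matrix R d b c *m u = 0,
        u ord0 ord0 = 1,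
        (0 < d)%N -> u (inord 1) ord0 = 0,
        u ord_max ord0 = (-1) ^+ (d./2) &
        forall v : 'cV[R]_d.+1, inter_matrix R d b c *m v = 0 ->
          exists k : R, v = k *: u].
Proof.
move=> drg bip anti [u u_neq0 Bu].
have [bc_sum c_pos b_pos b_c] := bipartite_antipodal_intersection_numbers drg bip anti.
have d_even : ~~ odd d.
  by apply: contra u_neq0 => d_odd; rewrite (inter_matrix_ker_odd bc_sum c_pos b_pos d_odd Bu).
split=> //; exists (\col_(j < d.+1) ker_gen R b c j); split.
- exact: (mul_inter_matrix_ker_gen R bc_sum c_pos d_even).
- by rewrite mxE.
- by move=> d_gt0; rewrite mxE inordK.
- by rewrite mxE (ker_gen_last R c_pos b_c d_even).
- by move=> v /(inter_matrix_ker_span bc_sum c_pos).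
Qed.
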